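(* Let $\Lambda$ be a lattice with basis $B_\Lambda$; for $i=1,2$ let $Z_i$ be a lattice with orthonormal basis $B_i$ and $\iota_i:\Lambda\hookrightarrow Z_i$ a lattice embedding. Suppose that $\langle\iota_1(x),e\rangle\in\{0,1\}$ for all $x\in B_\Lambda$, $e\in B_1$; that for every $e\in B_1$ there exists $x\in B_\Lambda$ with $\langle\iota_1(x),e\rangle\neq0$; and that for $i=1,2$ the restriction map $Z_i^*\to\Lambda^*$ (via $\iota_i$) induces a surjection $r_i:\mathrm{Short}(Z_i)\to\mathrm{Short}(\Lambda)$. Then there exists a lattice embedding $\iota:Z_1\hookrightarrow Z_2$ such that $\iota_2=\iota\circ\iota_1$.
   Context: A lattice is a finitely generated free abelian group with a non-degenerate symmetric $\mathbb{Q}$-valued bilinear form; a lattice embedding is an injective homomorphism preserving the form. For an integral positive definite lattice $\Lambda$ (here $\Lambda$ embeds in $Z_1$, so it is such), $\Lambda^*=\{x\in\Lambda\otimes\mathbb{Q}:\langle x,y\rangle\in\mathbb{Z}\ \forall y\}$, $\mathrm{Char}(\Lambda)=\{\chi\in\Lambda^*:\langle\chi,y\rangle\equiv\langle y,y\rangle\pmod 2\ \forall y\in\Lambda\}$, and $\mathrm{Short}(\Lambda)$ is the set of $\chi\in\mathrm{Char}(\Lambda)$ with $\langle\chi,\chi\rangle\le\langle\chi',\chi'\rangle$ for all $\chi'\in\chi+2\Lambda$. For $Z_i$ with orthonormal basis $B_i$, $\mathrm{Short}(Z_i)$ consists of the vectors $\chi$ with $\langle\chi,e\rangle=\pm1$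 for all $e\in B_i$. *)

From HB Require Import structures.
From mathcomp Require Import all_boot all_order all_algebra.
Set Implicit Arguments. Unset Strict Implicit. Unset Printing Implicit Defensive.
Import Order.TTheory GRing.Theory Num.Theory.
Local Open Scope ring_scope.

(* A lattice of rank n is Z^n (coordinates w.r.t. the basis B_Lambda) equipped
   with a Gram matrix G (symmetric, non-degenerate, rational entries).
   Vectors of Lambda (x) Q are rational row vectors. *)

Definition ratm (m n : nat) (A : 'M[int]_(m, n)) : 'M[rat]_(m, n) :=
  map_mx (fun z : int => z%:~R) A.

Definition bil (n : nat) (G : 'M[rat]_n) (x y : 'rV[rat]_n) : rat :=
  (x *m G *m y^T) 0 0.

Definition is_lattice (n : nat) (G : 'M[rat]_n) : Prop :=
  G^T = G /\ G \in unitmx.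

Definition lattice_embedding (n m : nat) (G : 'M[rat]_n) (H : 'M[rat]_m)
    (A : 'M[int]_(n, m)) : Prop :=
  (forall y z : 'rV[int]_n, y *m A = z *m A -> y = z) /\
  (forall y z : 'rV[int]_n,
      bil H (ratm (y *m A)) (ratm (z *m A)) = bil G (ratm y) (ratm z)).

Definition in_dual (n : nat) (G : 'M[rat]_n) (x : 'rV[rat]_n) : Prop :=
  forall y : 'rV[int]_n, exists k : int, bil G x (ratm y) = k%:~R.

Definition is_char (n : nat) (G : 'M[rat]_n) (x : 'rV[rat]_n) : Prop :=
  in_dual G x /\
  forall y : 'rV[int]_n, exists k : int,
    bil G x (ratm y) - bil G (ratm y) (ratm y) = (2 * k)%:~R.

Definition is_short (n : nat) (G : 'M[rat]_n) (x : 'rV[rat]_n) : Prop :=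
  is_char G x /\
  forall y : 'rV[int]_n,
    bil G x x <= bil G (x + 2%:R *: ratm y) (x + 2%:R *: ratm y).

(* restriction map Z^* -> Lambda^* along the embedding A : (Z^n,G) -> (Z^m,H):
   chi |-> the element xi of Lambda (x) Q with <xi, y>_G = <chi, y A>_H. *)
Definition restr (n m : nat) (G : 'M[rat]_n) (H : 'M[rat]_m)
    (A : 'M[int]_(n, m)) (chi : 'rV[rat]_m) : 'rV[rat]_n :=
  chi *m H *m (ratm A)^T *m invmx G.

Definition induces_short_surj (n m : nat) (G : 'M[rat]_n) (H : 'M[rat]_m)
    (A : 'M[int]_(n, m)) : Prop :=
  (forall chi, is_short H chi -> is_short G (restr G H A chi)) /\
  (forall xi, is_short G xi -> exists2 chi, is_short H chi & restr G H A chi = xi).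

(* Short characteristic covectors of the standard lattice are exactly the +-1 vectors, so the
   two surjectivity hypotheses say that [A1] and [A2] turn sign vectors into the same set of
   covectors of the lattice.  As the l1-norm of [l *m A] is the maximum of its pairing with sign
   vectors, [l *m A1] and [l *m A2] have the same l1-norm for every [l].  Together with
   [A1 *m A1^T = G = A2 *m A2^T] this forces [A2] to have entries in {0, 1, -1}, with no column
   containing both signs, so after flipping signs of columns [A2] is a 0/1 matrix as well.  For a
   0/1 matrix, the l1-norms at the vectors equal to 1 on [W] and to a large constant off [W]
   count the columns supported inside [W]; Moebius inversion over subsets then recovers the
   number of columns with each given support.  Matching the columns of [A1] and [A2] with equal
   supports yields a signed partial permutation matrix [C]. *)

From HB Require Import structures.
From mathcomp Require Import all_boot all_order all_algebra.
From mathcomp Require Import zify ring.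
Import Order.TTheory GRing.Theory Num.Theory.
Local Open Scope ring_scope.
Set Implicit Arguments. Unset Strict Implicit.

Lemma subset_sums_inj (T : finType) (V : zmodType) (f g : {set T} -> V) :
  (forall W : {set T},
     \sum_(U : {set T} | U \subset W) f U = \sum_(U : {set T} | U \subset W) g U) ->
  f =1 g.
Proof.
move=> fg U; have [k] := ubnP #|U|; elim: k U => // k IH U ltUk.
have := fg U; rewrite (bigD1 U) ?subxx //= [in RHS](bigD1 U) ?subxx //=.
rewrite (eq_bigr g) => [/addIr //|W].
case/andP=> sWU nWU; apply: IH; rewrite -ltnS; apply: leq_trans ltUk.
by rewrite ltnS proper_card // properEneq nWU.
Qed.

Lemma fiber_matching (I J : finType) (V : eqType) (p : I -> V) (q : J -> V) (v0 : V) :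
  (forall i, p i != v0) ->
  (forall v, v != v0 -> #|[pred i | p i == v]| = #|[pred j | q j == v]|) ->
  exists f : I -> J, [/\ injective f, forall i, q (f i) = p i &
                         forall j, q j != v0 -> exists i, f i = j].
Proof.
move=> pv0 card_fib.
pose EI v := enum [pred i | p i == v]; pose EJ v := enum [pred j | q j == v].
have size_fib v : v != v0 -> size (EI v) = size (EJ v) by move=> ?; rewrite -!cardE card_fib.
have memEI i : i \in EI (p i) by rewrite mem_enum inE.
case: (pickP (@predT J)) => [j0 _|J0]; last first.
  have I0 (i : I) : False.
    have := size_fib _ (pv0 i); have := memEI i.
    by case: (EJ (p i)) => [|j]; [case: (EI _) | have := J0 j].
  by exists (fun i => match I0 i with end); split=> [i|i|j]; [case: (I0 i)..|have := J0 j].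
pose f i := nth j0 (EJ (p i)) (index i (EI (p i))).
have idx_lt i : (index i (EI (p i)) < size (EJ (p i)))%N by rewrite -size_fib ?index_mem.
have qf i : q (f i) = p i by have := mem_nth j0 (idx_lt i); rewrite mem_enum inE => /eqP.
exists f; split=> // [i i' fii'|j qj].
  have pii' : p i = p i' by rewrite -qf fii' qf.
  move: fii'; rewrite /f -pii' => /eqP.
  rewrite nth_uniq ?enum_uniq ?idx_lt //; last by rewrite pii' idx_lt.
  by move/eqP/(congr1 (nth i (EI (p i)))); rewrite !nth_index // pii'.
have memj : j \in EJ (q j) by rewrite mem_enum inE.
have : (index j (EJ (q j)) < size (EI (q j)))%N by rewrite size_fib // index_mem.
case E: (EI (q j)) => [//|i0 s] lt_idx.
have : nth i0 (EI (q j)) (index j (EJ (q j))) \in EI (q j) by rewrite mem_nth // E.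
rewrite {1}mem_enum inE => /eqP pi.
exists (nth i0 (EI (q j)) (index j (EJ (q j)))).
by rewrite /f pi index_uniq ?enum_uniq ?E // nth_index.
Qed.

Lemma ratmM m n p (A : 'M[int]_(m, n)) (B : 'M[int]_(n, p)) :
  ratm (A *m B) = ratm A *m ratm B.
Proof.
apply/matrixP => i j; rewrite !mxE rmorph_sum; apply: eq_bigr => k _.
by rewrite !mxE rmorphM.
Qed.

Lemma ratmT m n (A : 'M[int]_(m, n)) : ratm A^T = (ratm A)^T.
Proof. by apply/matrixP => i j; rewrite !mxE. Qed.

Lemma ratm_inj m n : injective (@ratm m n).
Proof.
move=> A B /matrixP eqAB; apply/matrixP => i j.
by have := eqAB i j; rewrite !mxE => /intr_inj.
Qed.

Lemma bil_id m (x y : 'rV[rat]_m) : bil 1%:M x y = \sum_j x 0 j * y 0 j.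
Proof. by rewrite /bil mulmx1 mxE; apply: eq_bigr => j _; rewrite mxE. Qed.

Lemma bil_id_delta m (x : 'rV[rat]_m) j :
  bil 1%:M x (ratm (delta_mx 0 j)) = x 0 j.
Proof.
rewrite bil_id (bigD1 j) //= big1 ?addr0 => [|i /negbTE nij]; rewrite !mxE ?nij.
  by rewrite !eqxx mulr1.
by rewrite andbF mulr0.
Qed.

Definition sign_vector m (c : 'rV[int]_m) := forall j, c 0 j = 1 \/ c 0 j = -1.

Lemma sign_vector_short m (c : 'rV[int]_m) :
  sign_vector c -> is_short 1%:M (ratm c).
Proof.
move=> c_sign; split; [split|] => y.
- exists (\sum_j c 0 j * y 0 j); rewrite bil_id rmorph_sum.
  by apply: eq_bigr => j _; rewrite !mxE rmorphM.
- have parity j : exists t : int, c 0 j * y 0 j - y 0 j * y 0 j == 2 * t.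
    have [t [->|->]] : exists t : int, y 0 j = 2 * t \/ y 0 j = 2 * t + 1.
      exists (divz (y 0 j) 2); have := divz_eq (y 0 j) 2.
      have := modz_ge0 (y 0 j) (isT : (2 : int) != 0).
      have := ltz_pmod (y 0 j) (isT : (0 < (2 : int))); lia.
    + case: (c_sign j) => ->; [exists (t - 2 * t * t) | exists (- t - 2 * t * t)];
        by apply/eqP; ring.
    + case: (c_sign j) => ->; [exists (- t - 2 * t * t) | exists (- 3 * t - 1 - 2 * t * t)];
        by apply/eqP; ring.
  exists (\sum_j xchoose (parity j)).
  rewrite !bil_id -sumrB mulr_sumr rmorph_sum; apply: eq_bigr => j _.
  rewrite !mxE -!intrM -intrB; congr (_%:~R).
  exact/eqP/(xchooseP (parity j)).
- rewrite !bil_id; apply: ler_sum => j _; rewrite !mxE.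
  rewrite -[2%:R]/((2 : int)%:~R) -!intrM -intrD -intrM ler_int.
  by case: (c_sign j) => ->; nia.
Qed.

Lemma short_sign_vector m (x : 'rV[rat]_m) :
  is_short 1%:M x -> exists2 c : 'rV[int]_m, sign_vector c & x = ratm c.
Proof.
move=> [[x_dual x_char] x_short].
have unit_coord j : exists t : int, ((t == 1) || (t == -1)) && (x 0 j == t%:~R).
  have [k xk] := x_dual (delta_mx 0 j); rewrite bil_id_delta in xk.
  have [k' xk'] := x_char (delta_mx 0 j); rewrite !bil_id_delta xk !mxE !eqxx in xk'.
  have k_odd : k - 1 = 2 * k' by apply: (@intr_inj rat); rewrite intrB xk'.
  (* moving the j-th coordinate by [2 s] must not decrease the norm *)
  have step (s : int) : (s == 1) || (s == -1) -> 0 <= 4 * s * k + 4.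
    move=> s_unit; have := x_short (s *: delta_mx 0 j).
    rewrite !bil_id -subr_ge0 -sumrB (bigD1 j) //= big1 ?addr0; last first.
      by move=> i /negbTE nij; rewrite !mxE nij andbF !mulr0 addr0 subrr.
    rewrite !mxE !eqxx /= mulr1n mulr1 xk -(ler_int rat) => ge0; apply: le_trans ge0 _.
    by case/orP: s_unit => /eqP ->; rewrite le_eqVlt; apply/orP; left; apply/eqP; ring.
  have := step 1 isT; have := step (-1) isT.
  by exists k; rewrite xk eqxx andbT; apply/orP; lia.
exists (\row_j xchoose (unit_coord j)).
  move=> j; rewrite mxE.
  by have /andP[/orP[/eqP->|/eqP->] _] := xchooseP (unit_coord j); [left|right].
apply/matrixP => i j; rewrite (ord1 i) !mxE.
by have /andP[_ /eqP] := xchooseP (unit_coord j).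
Qed.

Lemma sign_vector_transfer n m1 m2 (G : 'M[rat]_n)
    (A1 : 'M[int]_(n, m1)) (A2 : 'M[int]_(n, m2)) :
  G \in unitmx -> induces_short_surj G 1%:M A1 -> induces_short_surj G 1%:M A2 ->
  forall c : 'rV[int]_m2, sign_vector c ->
  exists2 s : 'rV[int]_m1, sign_vector s & s *m A1^T = c *m A2^T.
Proof.
move=> G_unit [_ onto1] [restr2 _] c c_sign.
have [chi /short_sign_vector [s s_sign ->] restr_s] :=
  onto1 _ (restr2 _ (sign_vector_short c_sign)).
exists s => //; apply: ratm_inj; rewrite !ratmM !ratmT.
move/(congr1 (mulmx^~ G)): restr_s; rewrite /restr.
by rewrite !mulmxKV // !mulmx1.
Qed.

Definition norm1 m (v : 'rV[int]_m) : int := \sum_k `|v 0 k|.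

Lemma norm1_le_dot_sign m (v c : 'rV[int]_m) : sign_vector c -> (v *m c^T) 0 0 <= norm1 v.
Proof.
move=> c_sign; rewrite mxE; apply: ler_sum => k _; rewrite mxE.
by case: (c_sign k) => ->; rewrite ?mulr1 ?mulrN1 ?ler_norm // -normrN ler_norm.
Qed.

Lemma norm1_dot_sign m (v : 'rV[int]_m) :
  exists2 c : 'rV[int]_m, sign_vector c & norm1 v = (v *m c^T) 0 0.
Proof.
exists (\row_k (if 0 <= v 0 k then 1 else -1)).
  by move=> k; rewrite mxE; case: ifP; [left|right].
rewrite mxE; apply: eq_bigr => k _; rewrite !mxE.
case: ifP => [/ger0_norm -> | /negbT]; first by rewrite mulr1.
by rewrite -ltNge => /ltr0_norm ->; rewrite mulrN1.
Qed.

Lemma norm1_le_of_transfer n m1 m2 (A1 : 'M[int]_(n, m1)) (A2 : 'M[int]_(n, m2)) :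
  (forall c : 'rV[int]_m2, sign_vector c ->
     exists2 s : 'rV[int]_m1, sign_vector s & s *m A1^T = c *m A2^T) ->
  forall l, norm1 (l *m A2) <= norm1 (l *m A1).
Proof.
move=> transfer l; have [c c_sign ->] := norm1_dot_sign (l *m A2).
have [s s_sign s_c] := transfer c c_sign.
rewrite -mulmxA -[A2 *m c^T]trmxK trmx_mul trmxK -s_c trmx_mul trmxK mulmxA.
exact: norm1_le_dot_sign.
Qed.

Lemma bil_delta n (G : 'M[rat]_n) x y :
  bil G (ratm (delta_mx 0 x)) (ratm (delta_mx 0 y)) = G x y.
Proof.
rewrite /bil mxE (bigD1 y) //= big1 ?addr0 => [|i /negbTE niy]; last first.
  by rewrite !mxE niy /= mulr0.
rewrite !mxE !eqxx mulr1 (bigD1 x) //= big1 ?addr0 => [|i /negbTE nix]; last first.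
  by rewrite !mxE nix mul0r.
by rewrite !mxE !eqxx mul1r.
Qed.

Lemma embedding_gram n m (G : 'M[rat]_n) (A : 'M[int]_(n, m)) :
  lattice_embedding G 1%:M A -> G = ratm (A *m A^T).
Proof.
move=> [_ isoA]; apply/matrixP => x y.
rewrite -bil_delta -isoA bil_id -!rowE !mxE rmorph_sum; apply: eq_bigr => k _.
by rewrite !mxE rmorphM.
Qed.

Section ZeroOneColumns.
Variables (n m : nat) (A : 'M[int]_(n, m)).
Hypothesis A01 : forall x e, A x e = 0 \/ A x e = 1.

Definition col_supp (e : 'I_m) : {set 'I_n} := [set x | A x e != 0].

Lemma zero_one_entry x e : A x e = (x \in col_supp e)%:R.
Proof. by rewrite inE; case: (A01 x e) => ->. Qed.

Definition rv_split (W : {set 'I_n}) (a b : int) : 'rV[int]_n :=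
  \row_x (if x \in W then a else b).

Lemma rv_split_mul W a b e :
  (rv_split W a b *m A) 0 e =
  a * #|col_supp e :&: W|%:R + b * #|col_supp e :\: W|%:R.
Proof.
rewrite mxE (bigID (mem W)) /=; congr (_ + _);
  rewrite -sum1_card natr_sum mulr_sumr big_mkcond [RHS]big_mkcond;
  apply: eq_bigr => x _;
  rewrite !mxE zero_one_entry ?in_setI ?in_setD;
  by case: (x \in W); case: (x \in col_supp e); rewrite ?mulr1 ?mulr0.
Qed.

Definition fiber_weight (U : {set 'I_n}) : int := (#|U| * #|[pred e | col_supp e == U]|)%N%:R.

Definition covered_weight (W : {set 'I_n}) : int :=
  \sum_(e | col_supp e \subset W) #|col_supp e|%:R.

Lemma covered_weightE W :
  covered_weight W = \sum_(U : {set 'I_n} | U \subset W) fiber_weight U.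
Proof.
rewrite /covered_weight (partition_big col_supp (fun U => U \subset W)) //=.
apply: eq_bigr => U sUW; rewrite /fiber_weight.
rewrite (eq_bigl (fun e => col_supp e == U)) => [|e]; last first.
  by case: eqP => [->|]; rewrite ?sUW ?andbF.
rewrite (eq_bigr (fun => #|U|%:R)) => [|e /eqP -> //].
by rewrite sumr_const natrM mulr_natr.
Qed.

(* A column meeting the complement of [W] is killed by the large weight [n.+1] there. *)
Lemma covered_weight_norm1 W :
  2 * covered_weight W =
  2 * norm1 (rv_split W 1 0 *m A) - norm1 (rv_split W 1 n.+1%:R *m A)
  + norm1 (rv_split W (-1) n.+1%:R *m A).
Proof.
rewrite /covered_weight /norm1 big_mkcond !mulr_sumr -sumrB -big_split /=.
apply: eq_bigr => e _; rewrite !rv_split_mul mul1r mul0r addr0 mulN1r.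
have s_le : (#|col_supp e :&: W| <= n)%N by rewrite -[n in (_ <= n)%N]card_ord max_card.
rewrite -setD_eq0 -cards_eq0.
case: (boolP (#|col_supp e :\: W| == 0)%N) => [/eqP t0 | t_pos].
  rewrite t0 mulr0 !addr0 normrN !ger0_norm ?ler0n //.
  move/eqP: t0; rewrite cards_eq0 setD_eq0 => /setIidPl ->; ring.
set s := #|_ :&: _|; set t := #|_ :\: _|; rewrite mulr0.
have [s0 t1] : 0 <= s%:R :> int /\ 1 <= t%:R :> int by rewrite ler0n ler1n lt0n.
have sn : s%:R <= n%:R :> int by rewrite ler_nat.
rewrite !ger0_norm ?ler0n //; [|nia..]; ring.
Qed.

End ZeroOneColumns.

Section InjectionMatrix.
Variables (m1 m2 : nat) (f : 'I_m1 -> 'I_m2).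
Hypothesis f_inj : injective f.

Definition inj_mx : 'M[int]_(m1, m2) := \matrix_(i, j) (f i == j)%:R.

Lemma inj_mx_orthogonal : inj_mx *m inj_mx^T = 1%:M.
Proof.
apply/matrixP => i i'; rewrite !mxE (bigD1 (f i)) //= big1 => [|j /negbTE nj].
  by rewrite !mxE eqxx (inj_eq f_inj) eq_sym mul1r addr0.
by rewrite !mxE eq_sym nj mul0r.
Qed.

Lemma mul_inj_mx_img n (B : 'M[int]_(n, m1)) x i : (B *m inj_mx) x (f i) = B x i.
Proof.
rewrite mxE (bigD1 i) //= big1 => [|i' /negbTE ni']; first by rewrite !mxE eqxx mulr1 addr0.
by rewrite !mxE (inj_eq f_inj) ni' mulr0.
Qed.

Lemma mul_inj_mx_out n (B : 'M[int]_(n, m1)) x j :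
  (forall i, f i != j) -> (B *m inj_mx) x j = 0.
Proof. by move=> nfj; rewrite mxE big1 // => i _; rewrite mxE (negbTE (nfj i)) mulr0. Qed.

End InjectionMatrix.

Lemma zero_one_norm1_match n m1 m2 (P : 'M[int]_(n, m1)) (Q : 'M[int]_(n, m2)) :
  (forall x e, P x e = 0 \/ P x e = 1) -> (forall x k, Q x k = 0 \/ Q x k = 1) ->
  (forall e, exists x, P x e != 0) ->
  (forall l, norm1 (l *m P) = norm1 (l *m Q)) ->
  exists f : 'I_m1 -> 'I_m2, injective f /\ Q = P *m inj_mx f.
Proof.
move=> P01 Q01 P_nz norm1_PQ.
have covered_PQ W : covered_weight P W = covered_weight Q W.
  by apply: (@mulfI _ 2) => //; rewrite !covered_weight_norm1 // !norm1_PQ.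
have fibers U : U != set0 ->
    #|[pred e | col_supp P e == U]| = #|[pred k | col_supp Q k == U]|.
  move=> U_nz; have U_pos : (0 < #|U|)%N by rewrite card_gt0.
  apply/eqP; rewrite -(eqn_pmul2l U_pos) -(eqr_nat int).
  apply/eqP; change (fiber_weight P U = fiber_weight Q U); apply: subset_sums_inj => W.
  by rewrite -!covered_weightE.
have supp_nz e : col_supp P e != set0.
  by have [x Pxe] := P_nz e; apply/set0Pn; exists x; rewrite inE.
have [f [f_inj supp_f onto_f]] := fiber_matching supp_nz fibers.
exists f; split => //; apply/matrixP => x k.
have [i /eqP <- | not_img] := pickP (fun i => f i == k).
  by rewrite mul_inj_mx_img // !zero_one_entry // supp_f.
rewrite mul_inj_mx_out => [|i]; last exact/negbT/not_img.
rewrite zero_one_entry //; case: (boolP (col_supp Q k == set0)) => [/eqP -> | /onto_f [i fi]].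
  by rewrite inE.
by have := not_img i; rewrite fi eqxx.
Qed.

Lemma norm1_delta_mul n m (A : 'M[int]_(n, m)) x :
  norm1 (delta_mx 0 x *m A) = \sum_k `|A x k|.
Proof. by apply: eq_bigr => k _; rewrite -rowE mxE. Qed.

Lemma norm1_delta2_mul n m (A : 'M[int]_(n, m)) x y :
  norm1 ((delta_mx 0 x + delta_mx 0 y) *m A) = \sum_k `|A x k + A y k|.
Proof. by apply: eq_bigr => k _; rewrite mulmxDl -!rowE !mxE. Qed.

Section Norm1Gram.
Variables (n m1 m2 : nat) (A1 : 'M[int]_(n, m1)) (A2 : 'M[int]_(n, m2)).
Hypothesis A1_01 : forall x e, A1 x e = 0 \/ A1 x e = 1.
Hypothesis norm1_eq : forall l, norm1 (l *m A1) = norm1 (l *m A2).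

Lemma norm1_gram_entries :
  A1 *m A1^T = A2 *m A2^T -> forall x k, A2 x k = 0 \/ A2 x k = 1 \/ A2 x k = -1.
Proof.
move=> /matrixP gram x k.
have gram_xx : \sum_e A1 x e * A1 x e = \sum_k A2 x k * A2 x k.
  by have := gram x x; rewrite !mxE => /eqP; under eq_bigr do rewrite mxE;
     under [X in _ == X]eq_bigr do rewrite mxE; move/eqP.
(* each [|a| <= a^2] and the sums agree, since both equal the squared norm of row [x] of [A1] *)
have sum0 : \sum_k (A2 x k * A2 x k - `|A2 x k|) = 0.
  rewrite sumrB -gram_xx -norm1_delta_mul -norm1_eq norm1_delta_mul.
  by apply/eqP; rewrite subr_eq0; apply/eqP/eq_bigr => e _; case: (A1_01 x e) => ->.
have ge0 k' : true -> 0 <= A2 x k' * A2 x k' - `|A2 x k'| by move=> _; nia.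
by have := psumr_eq0P ge0 sum0 (i := k) isT; nia.
Qed.

Lemma norm1_no_opposite_signs x y k : A2 x k = 1 -> A2 y k = -1 -> False.
Proof.
move=> A2xk A2yk.
(* rows [x] and [y] of [A1] are nonnegative, so the triangle inequality is an equality for [A1] *)
have sum0 : \sum_k (`|A2 x k| + `|A2 y k| - `|A2 x k + A2 y k|) = 0.
  rewrite sumrB big_split /= -!norm1_delta_mul -norm1_delta2_mul -!norm1_eq.
  rewrite !norm1_delta_mul norm1_delta2_mul -big_split /=.
  by apply/eqP; rewrite subr_eq0; apply/eqP/eq_bigr => e _;
     case: (A1_01 x e) => ->; case: (A1_01 y e) => ->.
have ge0 k' : true -> 0 <= `|A2 x k'| + `|A2 y k'| - `|A2 x k' + A2 y k'|.
  by move=> _; rewrite subr_ge0 ler_normD.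
by have := psumr_eq0P ge0 sum0 (i := k) isT; rewrite A2xk A2yk.
Qed.

End Norm1Gram.

Section SignVectors.
Variables (m : nat) (s : 'rV[int]_m).
Hypothesis s_sign : sign_vector s.

Lemma sign_diag_mul : diag_mx s *m diag_mx s = 1%:M.
Proof.
apply/matrixP => i j; rewrite mul_diag_mx !mxE.
by case: (s_sign i) => ->; case: (i == j); rewrite /= ?mulr0 ?mulN1r ?opprK.
Qed.

Lemma norm1_mul_sign_diag (v : 'rV[int]_m) : norm1 (v *m diag_mx s) = norm1 v.
Proof.
apply: eq_bigr => k _; rewrite mul_mx_diag mxE normrM.
by case: (s_sign k) => ->; rewrite ?normrN normr1 mulr1.
Qed.

End SignVectors.

Lemma sign_normalize n m (A : 'M[int]_(n, m)) :
  (forall x k, A x k = 0 \/ A x k = 1 \/ A x k = -1) ->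
  (forall x y k, A x k = 1 -> A y k = -1 -> False) ->
  exists2 s : 'rV[int]_m, sign_vector s &
    forall x k, (A *m diag_mx s) x k = 0 \/ (A *m diag_mx s) x k = 1.
Proof.
move=> A_entries A_signs.
exists (\row_k (if [exists x, A x k == -1] then -1 else 1)).
  by move=> k; rewrite mxE; case: ifP; [right|left].
move=> x k; rewrite mul_mx_diag !mxE; case: ifP => [/existsP[y /eqP Ayk] | /negbT].
  case: (A_entries x k) => [->|[Axk|->]]; [by left; rewrite mul0r | | by right].
  by case: (A_signs x y k).
rewrite negb_exists => /forallP /(_ x).
by case: (A_entries x k) => [->|[->|->]]; [left|right|rewrite eqxx].
Qed.

Lemma orthogonal_embedding m1 m2 (C : 'M[int]_(m1, m2)) :
  C *m C^T = 1%:M -> lattice_embedding 1%:M 1%:M C.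
Proof.
move=> CCt; split => [y z /(congr1 (mulmx^~ C^T)) | y z].
  by rewrite -!mulmxA CCt !mulmx1.
by rewrite /bil !mulmx1 -!ratmT -!ratmM trmx_mul mulmxA -(mulmxA y) CCt mulmx1.
Qed.

Unset Implicit Arguments.
Theorem proposition2p8 (n m1 m2 : nat) (G : 'M[rat]_n)
    (A1 : 'M[int]_(n, m1)) (A2 : 'M[int]_(n, m2)) :
  is_lattice G ->
  lattice_embedding G 1%:M A1 ->
  lattice_embedding G 1%:M A2 ->
  (forall i j, A1 i j = 0 \/ A1 i j = 1) ->
  (forall j : 'I_m1, exists i : 'I_n, A1 i j != 0) ->
  induces_short_surj G 1%:M A1 ->
  induces_short_surj G 1%:M A2 ->
  exists C : 'M[int]_(m1, m2),
    lattice_embedding 1%:M 1%:M C /\ A2 = A1 *m C.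
Proof.
move=> [_ G_unit] emb1 emb2 A1_01 A1_nz short1 short2.
have norm1_eq l : norm1 (l *m A1) = norm1 (l *m A2).
  apply/eqP; rewrite eq_le.
  by rewrite !(norm1_le_of_transfer (sign_vector_transfer G_unit _ _)).
have gram_eq : A1 *m A1^T = A2 *m A2^T.
  by apply: ratm_inj; rewrite -(embedding_gram emb1) -(embedding_gram emb2).
have [s s_sign A2s_01] := sign_normalize (norm1_gram_entries A1_01 norm1_eq gram_eq)
                                        (norm1_no_opposite_signs A1_01 norm1_eq).
have [f [f_inj A2sE]] : exists f, injective f /\ A2 *m diag_mx s = A1 *m inj_mx f.
  apply: zero_one_norm1_match => // l.
  by rewrite norm1_eq mulmxA norm1_mul_sign_diag.
exists (inj_mx f *m diag_mx s); split.
  apply: orthogonal_embedding.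
  rewrite trmx_mul tr_diag_mx mulmxA -(mulmxA (inj_mx f)) sign_diag_mul //.
  by rewrite mulmx1 inj_mx_orthogonal.
by rewrite mulmxA -A2sE -mulmxA sign_diag_mul // mulmx1.
Qed.
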